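(* In the binary setting below, with $\mathrm{CL}_{\mathrm{induced}}:=-\mathbb{E}[\mathrm{Var}(S-C\mid S_B)]$ and $\mathrm{GL}_{\mathrm{induced}}:=\mathbb{E}[\mathrm{Var}(C\mid S_B)]$, $$-\mathbb{E}\Big[\sqrt{\mathrm{Var}(S\mid S_B)}\big(2\sqrt{C_B(1-C_B)}+\sqrt{\mathrm{Var}(S\mid S_B)}\big)\Big]\le\mathrm{CL}_{\mathrm{induced}}+\mathrm{GL}_{\mathrm{induced}}\le\mathbb{E}\Big[\sqrt{\mathrm{Var}(S\mid S_B)}\big(2\sqrt{C_B(1-C_B)}-\sqrt{\mathrm{Var}(S\mid S_B)}\big)\Big].$$ With $N$ equal-width bins, $$-\tfrac1N\mathbb{E}\big[\sqrt{C_B(1-C_B)}\big]-\tfrac{1}{4N^2}\le\mathrm{CL}_{\mathrm{induced}}+\mathrm{GL}_{\mathrm{induced}}\le\tfrac1N\mathbb{E}\big[\sqrt{C_B(1-C_B)}\big].$$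
   Context: Binary setting: $(X,Y)$ jointly distributed with $Y\in\{0,1\}$; $Q:=P(Y=1\mid X)$; $S=f(X)\in[0,1]$ is a classifier's confidence for the positive class; $C:=\mathbb{E}[Q\mid S]$. Given a partition of $[0,1]$ into interval bins $\mathcal{B}_j$, $S_B$ equals $\mathbb{E}[S\mid S\in\mathcal{B}_j]$ on $\{S\in\mathcal{B}_j\}$, and $C_B:=\mathbb{E}[Q\mid S_B]=\mathbb{E}[C\mid S_B]$. $\mathrm{Var}(\cdot\mid S_B)$ is the ordinary conditional variance. ''$N$ equal-width bins'' means the bins are the intervals of length $1/N$ partitioning $[0,1]$. *)

From HB Require Import structures.
From mathcomp Require Import all_boot all_order all_algebra.
From mathcomp Require Import all_classical all_reals all_analysis.
Set Implicit Arguments. Unset Strict Implicit. Unset Printing Implicit Defensive.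
Import Order.TTheory GRing.Theory Num.Theory.
Local Open Scope classical_set_scope.
Local Open Scope ring_scope.

Section defs.
Context {d : measure_display} {T : measurableType d} {R : realType}.
Variable P : probability T R.

Definition Ex (Z : T -> R) : R := fine (\int[P]_x (Z x)%:E)%E.

Definition is_cond_exp (Z : T -> R) {dU : measure_display} {U : measurableType dU}
  (W : T -> U) (V : T -> R) : Prop :=
  (exists g : U -> R, measurable_fun setT g /\ V = g \o W) /\
  P.-integrable setT (EFin \o V) /\
  forall A : set U, measurable A ->
    (\int[P]_(x in W @^-1` A) (Z x)%:E = \int[P]_(x in W @^-1` A) (V x)%:E)%E.

(* elementary conditional expectation given a discrete (finitely valued)
   random variable W:  E[Z | W](t) = E[Z 1_{W = W t}] / P(W = W t) *)
Definition cexpd (Z : T -> R) (W : T -> R) : T -> R :=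
  fun t => Ex (fun s => Z s * (W s == W t)%:R) / fine (P [set s | W s = W t]).

Definition cvard (Z : T -> R) (W : T -> R) : T -> R :=
  cexpd (fun s => (Z s - cexpd Z W s) ^+ 2) W.

Definition binavg (S : T -> R) (B : set R) : R :=
  Ex (fun s => S s * \1_B (S s)) / fine (P (S @^-1` B)).

Definition binned (S : T -> R) (n : nat) (B : 'I_n -> set R) : T -> R :=
  fun t => \sum_(j < n) \1_(B j) (S t) * binavg S (B j).

End defs.

Definition interval_partition {R : realType} (n : nat) (B : 'I_n -> set R) : Prop :=
  (forall j, is_interval (B j)) /\
  (forall i j, i != j -> B i `&` B j = set0) /\
  \bigcup_(j in [set: 'I_n]) B j = `[0, 1]%classic.

(* the bins are the intervals of length 1/N partitioning [0,1]
   (any endpoint convention): the j-th bin lies between ]j/N,(j+1)/N[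
   and [j/N,(j+1)/N] *)
Definition equal_width_bins {R : realType} (N : nat) (B : 'I_N -> set R) : Prop :=
  interval_partition B /\
  forall j : 'I_N,
    `](j%:R / N%:R), (j.+1%:R / N%:R)[%classic `<=` B j /\
    B j `<=` `[(j%:R / N%:R), (j.+1%:R / N%:R)]%classic.

From HB Require Import structures.
From mathcomp Require Import all_boot all_order all_algebra.
From mathcomp Require Import all_classical all_reals all_analysis.
From mathcomp Require Import measurable_realfun ring lra.
Set Implicit Arguments.
Unset Strict Implicit.
Unset Printing Implicit Defensive.
Import Order.TTheory GRing.Theory Num.Theory.
Local Open Scope classical_set_scope.
Local Open Scope ring_scope.

(* Conditionally on a level set {S_B = v}, Var(C) - Var(S - C) = 2 Cov(S, C) - Var(S),
   and by Cauchy-Schwarz |Cov(S, C)| <= sqrt(Var S) sqrt(Var C), where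
   Var C <= C_B (1 - C_B) because C, a conditional expectation of the indicator Y,
   lies in [0, 1] almost surely.  Integrating these pointwise bounds over S_B gives
   the first pair of inequalities.  With N equal-width bins, S stays within an
   interval of length 1/N on each bin, so Var(S | S_B) <= 1/(4N^2), and the bounds
   are monotone in sqrt(Var(S | S_B)) <= 1/(2N). *)

Section bounded_measurable.
Context {d : measure_display} {T : measurableType d} {R : realType}.
Implicit Types (Z : T -> R) (k : R).

Definition bounded_measurable Z : Prop :=
  measurable_fun setT Z /\ exists M, forall t, `|Z t| <= M.

(* Equivalently: W is measurable and takes finitely many values. *)
Definition simple_rv (W : T -> R) : Prop :=
  forall h : R -> R, bounded_measurable (fun t => h (W t)).

Lemma bounded_measurable_in01 Z : measurable_fun setT Z ->
  (forall t, 0 <= Z t <= 1) -> bounded_measurable Z.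
Proof.
by move=> mZ Z01; split=> //; exists 1 => t; have /andP[Z0 Z1] := Z01 t; rewrite ger0_norm.
Qed.

Lemma bounded_measurable_cst k : bounded_measurable (fun _ => k).
Proof. by split; [exact: measurable_cst | exists `|k|]. Qed.

Lemma bounded_measurableD (Z1 Z2 : T -> R) :
  bounded_measurable Z1 -> bounded_measurable Z2 ->
  bounded_measurable (fun t => Z1 t + Z2 t).
Proof.
case=> m1 [M1 h1] [m2 [M2 h2]]; split; first exact: measurable_funD.
by exists (M1 + M2) => t; apply: le_trans (ler_normD _ _) _; exact: lerD.
Qed.

Lemma bounded_measurableN Z : bounded_measurable Z -> bounded_measurable (fun t => - Z t).
Proof.
by case=> m [M h]; split; [exact: measurable_funN | exists M => t; rewrite normrN].
Qed.

Lemma bounded_measurableB (Z1 Z2 : T -> R) :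
  bounded_measurable Z1 -> bounded_measurable Z2 ->
  bounded_measurable (fun t => Z1 t - Z2 t).
Proof. by move=> b1 b2; apply: bounded_measurableD => //; exact: bounded_measurableN. Qed.

Lemma bounded_measurableM (Z1 Z2 : T -> R) :
  bounded_measurable Z1 -> bounded_measurable Z2 ->
  bounded_measurable (fun t => Z1 t * Z2 t).
Proof.
case=> m1 [M1 h1] [m2 [M2 h2]]; split; first exact: measurable_funM.
exists (`|M1| * `|M2|) => t; rewrite normrM.
by apply: ler_pM => //; exact: le_trans (ler_norm _).
Qed.

Lemma bounded_measurableX Z : bounded_measurable Z ->
  bounded_measurable (fun t => Z t ^+ 2).
Proof. by move=> bZ; exact: bounded_measurableM. Qed.

Lemma bounded_measurable_sum (I : Type) (r : seq I) (F : I -> T -> R) :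
  (forall i, bounded_measurable (F i)) ->
  bounded_measurable (fun t => \sum_(i <- r) F i t).
Proof.
move=> bF; elim: r => [|i r IH].
  by under eq_fun do rewrite big_nil; exact: bounded_measurable_cst.
by under eq_fun do rewrite big_cons; exact: bounded_measurableD.
Qed.

End bounded_measurable.

Ltac bounded_measurable_tac :=
  repeat first [ assumption | apply: bounded_measurable_cst | apply: bounded_measurableX
               | apply: bounded_measurableD | apply: bounded_measurableB
               | apply: bounded_measurableM | apply: bounded_measurableN ].

Section expectation.
Context {d : measure_display} {T : measurableType d} {R : realType}.
Variable P : probability T R.
Implicit Types (Z : T -> R) (k : R).

Lemma bounded_measurable_integrable Z :
  bounded_measurable Z -> P.-integrable setT (EFin \o Z).
Proof.
case=> mZ [M hM]; apply: measurable_bounded_integrable => //.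
  by have := probability_setT P; move=> /= ->; rewrite ltry.
exists M; split; first exact: num_real.
by move=> y My x _ /=; exact: le_trans (hM x) (ltW My).
Qed.

Lemma eq_Ex (Z1 Z2 : T -> R) : Z1 =1 Z2 -> Ex P Z1 = Ex P Z2.
Proof. by move=> /funext ->. Qed.

Lemma ExD (Z1 Z2 : T -> R) :
  bounded_measurable Z1 -> bounded_measurable Z2 ->
  Ex P (fun t => Z1 t + Z2 t) = Ex P Z1 + Ex P Z2.
Proof.
by move=> /bounded_measurable_integrable i1 /bounded_measurable_integrable i2;
  exact: RintegralD.
Qed.

Lemma ExB (Z1 Z2 : T -> R) :
  bounded_measurable Z1 -> bounded_measurable Z2 ->
  Ex P (fun t => Z1 t - Z2 t) = Ex P Z1 - Ex P Z2.
Proof.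
by move=> /bounded_measurable_integrable i1 /bounded_measurable_integrable i2;
  exact: RintegralB.
Qed.

Lemma ExZ k Z : bounded_measurable Z -> Ex P (fun t => k * Z t) = k * Ex P Z.
Proof. by move=> /bounded_measurable_integrable iZ; exact: RintegralZl. Qed.

Lemma ExN Z : bounded_measurable Z -> Ex P (fun t => - Z t) = - Ex P Z.
Proof. by move=> bZ; rewrite -mulN1r -ExZ //; apply: eq_Ex => t; rewrite mulN1r. Qed.

Lemma Ex_cst k : Ex P (fun _ => k) = k.
Proof.
rewrite [LHS](Rintegral_cst P measurableT).
by have := probability_setT P; move=> /= ->; rewrite mulr1.
Qed.

Lemma le_Ex (Z1 Z2 : T -> R) :
  bounded_measurable Z1 -> bounded_measurable Z2 ->
  (forall t, Z1 t <= Z2 t) -> Ex P Z1 <= Ex P Z2.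
Proof.
move=> /bounded_measurable_integrable i1 /bounded_measurable_integrable i2 le12.
by apply: le_Rintegral => // t _; exact: le12.
Qed.

Lemma Ex_ge0 Z : (forall t, 0 <= Z t) -> 0 <= Ex P Z.
Proof. by move=> Z0; apply: Rintegral_ge0 => t _; exact: Z0. Qed.

Lemma Ex_sum (I : Type) (r : seq I) (F : I -> T -> R) :
  (forall i, bounded_measurable (F i)) ->
  Ex P (fun t => \sum_(i <- r) F i t) = \sum_(i <- r) Ex P (F i).
Proof.
move=> bF; elim: r => [|i r IH].
  by under eq_fun do rewrite big_nil; rewrite big_nil Ex_cst.
under eq_fun do rewrite big_cons.
by rewrite big_cons ExD ?IH //; exact: bounded_measurable_sum.
Qed.

Lemma ae_eq_Ex (Z1 Z2 : T -> R) : measurable_fun setT Z1 -> measurable_fun setT Z2 ->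
  {ae P, forall t, Z1 t = Z2 t} -> Ex P Z1 = Ex P Z2.
Proof.
move=> m1 m2 Z12; rewrite /Ex; congr fine; apply: ae_eq_integral => //.
- exact/measurable_EFinP.
- exact/measurable_EFinP.
- by apply: filterS Z12 => t /= -> _.
Qed.

Lemma ae_in01_version Z : measurable_fun setT Z -> {ae P, forall t, 0 <= Z t <= 1} ->
  exists2 Z' : T -> R, measurable_fun setT Z' /\ (forall t, 0 <= Z' t <= 1) &
    {ae P, forall t, Z t = Z' t}.
Proof.
move=> mZ Z01; exists (fun t => Num.min 1 (Num.max 0 (Z t))); first split.
- apply: measurable_minr; first exact: measurable_cst.
  by apply: measurable_maxr => //; exact: measurable_cst.
- by move=> t; rewrite le_min ge_min lexx ler01 le_max lexx /= ?orbT.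
by apply: filterS Z01 => t /andP[Z0 Z1]; rewrite max_r // min_r.
Qed.

End expectation.


Section real_inequalities.
Variable R : realType.

Lemma sqr_le_of_quadratic_ge0 (A K B : R) :
  (forall l, 0 <= l ^+ 2 * A + 2 * l * K + B) -> K ^+ 2 <= A * B.
Proof.
move=> q_ge0.
have := @deg_le2_poly_ge0 R (Poly [:: B; 2 * K; A]) (size_Poly _).
rewrite !coef_Poly /= => disc.
suff : (2 * K) ^+ 2 - 4 * A * B <= 0 by nra.
by apply: disc => x; rewrite !horner_cons hornerC; have := q_ge0 x; nra.
Qed.

Lemma twice_cov_sub_var_bounds (a b c k : R) :
  0 <= a -> 0 <= b -> b <= c -> k ^+ 2 <= a * b ->
  - (Num.sqrt a * (2 * Num.sqrt c + Num.sqrt a)) <= 2 * k - a <=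
    Num.sqrt a * (2 * Num.sqrt c - Num.sqrt a).
Proof.
move=> a0 b0 bc kab.
have hk : `|k| <= Num.sqrt a * Num.sqrt c.
  rewrite -sqrtrM // -sqrtr_sqr ler_sqrt; last by apply: mulr_ge0 => //; lra.
  by apply: le_trans kab _; exact: ler_wpM2l.
have := sqrtr_ge0 a; have := sqrtr_ge0 c; have := sqr_sqrtr a0.
move: hk; set x := Num.sqrt a; set y := Num.sqrt c => hk <- y0 x0.
have [k0|k0] := lerP 0 k; move: hk; [rewrite ger0_norm // | rewrite ltr0_norm //] => hk.
  by apply/andP; split; nra.
by apply/andP; split; nra.
Qed.

End real_inequalities.

Section weighted_moments.
Context {d : measure_display} {T : measurableType d} {R : realType}.
Variables (P : probability T R) (u : T -> R).
Implicit Types (Z : T -> R) (a c : R).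

Definition wmean Z : R := Ex P (fun s => Z s * u s) / Ex P u.

Definition wvar Z : R := wmean (fun s => (Z s - wmean Z) ^+ 2).

Definition wcov (Z1 Z2 : T -> R) : R :=
  wmean (fun s => (Z1 s - wmean Z1) * (Z2 s - wmean Z2)).

Lemma eq_wmean (Z1 Z2 : T -> R) : (forall s, u s != 0 -> Z1 s = Z2 s) ->
  wmean Z1 = wmean Z2.
Proof.
move=> Z12; rewrite /wmean; congr (_ / _); apply: eq_Ex => s.
by have [->|us] := eqVneq (u s) 0; rewrite ?mulr0 ?Z12.
Qed.

Hypotheses (bu : bounded_measurable u) (u_ge0 : forall s, 0 <= u s).

Lemma wmean_eq0 Z : Ex P u = 0 -> wmean Z = 0.
Proof. by rewrite /wmean => ->; rewrite invr0 mulr0. Qed.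

Lemma wmeanD (Z1 Z2 : T -> R) :
  bounded_measurable Z1 -> bounded_measurable Z2 ->
  wmean (fun s => Z1 s + Z2 s) = wmean Z1 + wmean Z2.
Proof.
move=> b1 b2; rewrite /wmean -mulrDl -ExD; [|bounded_measurable_tac..].
by congr (_ / _); apply: eq_Ex => s; rewrite mulrDl.
Qed.

Lemma wmeanB (Z1 Z2 : T -> R) :
  bounded_measurable Z1 -> bounded_measurable Z2 ->
  wmean (fun s => Z1 s - Z2 s) = wmean Z1 - wmean Z2.
Proof.
move=> b1 b2; rewrite /wmean -mulrBl -ExB; [|bounded_measurable_tac..].
by congr (_ / _); apply: eq_Ex => s; rewrite mulrBl.
Qed.

Lemma wmeanZ a Z : bounded_measurable Z -> wmean (fun s => a * Z s) = a * wmean Z.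
Proof.
move=> bZ; rewrite /wmean mulrA -ExZ; last by bounded_measurable_tac.
by congr (_ / _); apply: eq_Ex => s; rewrite mulrA.
Qed.

Lemma wmean_cst a : Ex P u != 0 -> wmean (fun _ => a) = a.
Proof. by move=> u_neq0; rewrite /wmean ExZ // mulfK. Qed.

Lemma wmean_ge0 Z : (forall s, 0 <= Z s) -> 0 <= wmean Z.
Proof.
by move=> Z0; apply: divr_ge0; apply: Ex_ge0 => s //; exact: mulr_ge0.
Qed.

Lemma le_wmean (Z1 Z2 : T -> R) :
  bounded_measurable Z1 -> bounded_measurable Z2 ->
  (forall s, 0 < u s -> Z1 s <= Z2 s) -> wmean Z1 <= wmean Z2.
Proof.
move=> b1 b2 le12; rewrite /wmean ler_wpM2r ?invr_ge0 ?Ex_ge0 //.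
apply: le_Ex; [bounded_measurable_tac | bounded_measurable_tac | move=> s].
have := u_ge0 s; rewrite le_eqVlt => /orP[/eqP <-|us]; first by rewrite !mulr0.
by rewrite ler_pM2r // le12.
Qed.

Lemma Ex_mul_wmean Z : bounded_measurable Z ->
  Ex P (fun s => Z s * u s) = wmean Z * Ex P u.
Proof.
move=> bZ; have [u0|u_neq0] := eqVneq (Ex P u) 0; last by rewrite /wmean divfK.
have [_ [M hM]] := bZ.
have Z_bounds s : - M * u s <= Z s * u s <= M * u s.
  by move: (hM s); rewrite ler_norml => /andP[lo hi]; rewrite !ler_wpM2r.
rewrite u0 mulr0; apply/eqP; rewrite eq_le; apply/andP; split.
  rewrite -(mulr0 M) -u0 -ExZ //.
  by apply: le_Ex => [||s]; [bounded_measurable_tac.. | case/andP: (Z_bounds s)].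
rewrite -(mulr0 (- M)) -u0 -ExZ //.
by apply: le_Ex => [||s]; [bounded_measurable_tac.. | case/andP: (Z_bounds s)].
Qed.

Lemma wmean_sqr_lin a c (X Y : T -> R) : bounded_measurable X -> bounded_measurable Y ->
  wmean (fun s => (a * X s + c * Y s) ^+ 2) =
  a ^+ 2 * wmean (fun s => X s ^+ 2) + 2 * a * c * wmean (fun s => X s * Y s)
  + c ^+ 2 * wmean (fun s => Y s ^+ 2).
Proof.
move=> bX bY.
transitivity (wmean (fun s =>
  a ^+ 2 * X s ^+ 2 + 2 * a * c * (X s * Y s) + c ^+ 2 * Y s ^+ 2)).
  by congr wmean; apply: funext => s; ring.
by rewrite !wmeanD ?wmeanZ //; bounded_measurable_tac.
Qed.

Lemma wvar_ge0 Z : 0 <= wvar Z.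
Proof. by apply: wmean_ge0 => s; exact: sqr_ge0. Qed.

Lemma wcov_sqr_le (S C : T -> R) : bounded_measurable S -> bounded_measurable C ->
  wcov S C ^+ 2 <= wvar S * wvar C.
Proof.
move=> bS bC; apply: sqr_le_of_quadratic_ge0 => l.
have := @wmean_ge0 (fun s => (l * (S s - wmean S) + 1 * (C s - wmean C)) ^+ 2)
  (fun s => sqr_ge0 _).
by rewrite wmean_sqr_lin; [rewrite expr1n mulr1 mul1r | bounded_measurable_tac..].
Qed.

Lemma wvarB (S C : T -> R) : bounded_measurable S -> bounded_measurable C ->
  wvar (fun s => S s - C s) = wvar S - 2 * wcov S C + wvar C.
Proof.
move=> bS bC; rewrite {1}/wvar wmeanB //.
transitivity (wmean (fun s => (1 * (S s - wmean S) + (-1) * (C s - wmean C)) ^+ 2)).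
  by congr wmean; apply: funext => s; ring.
by rewrite wmean_sqr_lin; [rewrite /wvar /wcov; ring | bounded_measurable_tac..].
Qed.

Lemma wvar_le_wmean_onem C : bounded_measurable C -> (forall s, 0 <= C s <= 1) ->
  wvar C <= wmean C * (1 - wmean C).
Proof.
move=> bC C01; have [u0|u_neq0] := eqVneq (Ex P u) 0.
  by rewrite /wvar !wmean_eq0 // mul0r.
rewrite /wvar; set m := wmean C.
apply: (@le_trans _ _ (wmean (fun s => (1 - 2 * m) * C s + m ^+ 2))).
  apply: le_wmean; [bounded_measurable_tac | bounded_measurable_tac | move=> s _].
  by have /andP[c0 c1] := C01 s; nra.
by rewrite wmeanD ?wmean_cst ?wmeanZ // -/m; [nra | bounded_measurable_tac..].
Qed.

Lemma wvar_le_sqr_dev Z c : bounded_measurable Z ->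
  wvar Z <= wmean (fun s => (Z s - c) ^+ 2).
Proof.
move=> bZ; have [u0|u_neq0] := eqVneq (Ex P u) 0.
  by rewrite /wvar !wmean_eq0.
set m := wmean Z.
have -> : wmean (fun s => (Z s - c) ^+ 2) = wvar Z + (m - c) ^+ 2.
  transitivity (wmean (fun s => (Z s - m) ^+ 2 + (2 * (m - c) * Z s + (c ^+ 2 - m ^+ 2)))).
    by congr wmean; apply: funext => s; ring.
  by rewrite !wmeanD ?wmean_cst ?wmeanZ // /wvar -/m; [ring | bounded_measurable_tac..].
by rewrite lerDl sqr_ge0.
Qed.

Lemma wvar_le_sqr_halfwidth a c Z : bounded_measurable Z ->
  (forall s, 0 < u s -> a <= Z s <= c) -> wvar Z <= ((c - a) / 2) ^+ 2.
Proof.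
move=> bZ Zac; have [u0|u_neq0] := eqVneq (Ex P u) 0.
  by rewrite /wvar wmean_eq0 // sqr_ge0.
apply: le_trans (wvar_le_sqr_dev ((a + c) / 2) bZ) _.
rewrite -[leRHS](wmean_cst _ u_neq0).
apply: le_wmean; [bounded_measurable_tac | bounded_measurable_tac | move=> s us].
by have /andP[aZ Zc] := Zac s us; nra.
Qed.

End weighted_moments.

Section conditional.
Context {d : measure_display} {T : measurableType d} {R : realType}.
Variables (P : probability T R) (W : T -> R).

Definition level (v : R) (s : T) : R := (W s == v)%:R.

Hypothesis W_simple : simple_rv W.

Lemma simple_rv_level_const (g : T -> R) :
  (forall s t, W s = W t -> g s = g t) -> bounded_measurable g.
Proof.
move=> g_const; pose h v := g (xget point [set s | W s = v]).
have -> : g = fun t => h (W t).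
  apply: funext => t; apply: g_const; apply/esym.
  exact: (@xgetPex _ point [set s | W s = W t] (ex_intro _ t erefl)).
exact: W_simple.
Qed.

Lemma level_ge0 v s : 0 <= level v s.
Proof. exact: ler0n. Qed.

Lemma bounded_measurable_level v : bounded_measurable (level v).
Proof. exact: (W_simple (fun x => (x == v)%:R)). Qed.

Lemma Ex_level v : Ex P (level v) = fine (P [set s | W s = v]).
Proof.
have mWv : measurable [set s | W s = v].
  have [mW _] := W_simple id.
  by have := mW measurableT _ (measurable_set1 v); rewrite setTI.
transitivity (Ex P (\1_[set s | W s = v])).
  apply: eq_Ex => s; rewrite indicE /level.
  have [Wv|/eqP Wv] := eqVneq (W s) v; first by rewrite mem_set.
  by rewrite memNset.
by rewrite /Ex integral_indic // setIT.
Qed.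

Lemma cexpdE Z t : cexpd P Z W t = wmean P (level (W t)) Z.
Proof. by rewrite /cexpd /wmean Ex_level. Qed.

Lemma cvardE Z t : cvard P Z W t = wvar P (level (W t)) Z.
Proof.
rewrite /cvard cexpdE; apply: eq_wmean => s.
by rewrite cexpdE /level; have [->|] := eqVneq (W s) (W t); rewrite ?eqxx.
Qed.

Lemma cvard_diff_bounds (S C : T -> R) t :
  bounded_measurable S -> bounded_measurable C -> (forall s, 0 <= C s <= 1) ->
  let CB := cexpd P C W t in
  let VS := cvard P S W t in
  - (Num.sqrt VS * (2 * Num.sqrt (CB * (1 - CB)) + Num.sqrt VS))
    <= cvard P C W t - cvard P (fun s => S s - C s) W t <=
  Num.sqrt VS * (2 * Num.sqrt (CB * (1 - CB)) - Num.sqrt VS).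
Proof.
move=> bS bC C01 /=; rewrite !cvardE cexpdE.
have bu := bounded_measurable_level (W t); have u_ge0 := level_ge0 (W t).
rewrite wvarB //.
set u := level (W t).
have -> : wvar P u C - (wvar P u S - 2 * wcov P u S C + wvar P u C) =
          2 * wcov P u S C - wvar P u S by ring.
apply: (@twice_cov_sub_var_bounds _ _ (wvar P u C)).
- exact: wvar_ge0.
- exact: wvar_ge0.
- exact: wvar_le_wmean_onem.
- exact: wcov_sqr_le.
Qed.

Lemma induced_loss_bounds (S C : T -> R) :
  bounded_measurable S -> bounded_measurable C -> (forall s, 0 <= C s <= 1) ->
  let CB := cexpd P C W in
  let VS := cvard P S W in
  let CL := - Ex P (cvard P (fun t => S t - C t) W) in
  let GL := Ex P (cvard P C W) in
  - Ex P (fun t => Num.sqrt (VS t) * (2 * Num.sqrt (CB t * (1 - CB t)) + Num.sqrt (VS t)))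
    <= CL + GL /\
  CL + GL <=
    Ex P (fun t => Num.sqrt (VS t) * (2 * Num.sqrt (CB t * (1 - CB t)) - Num.sqrt (VS t))).
Proof.
move=> bS bC C01 CB VS CL GL.
have [bVSC bVC bLo bUp] : [/\ bounded_measurable (cvard P (fun t => S t - C t) W),
    bounded_measurable (cvard P C W),
    bounded_measurable (fun t => Num.sqrt (VS t) *
      (2 * Num.sqrt (CB t * (1 - CB t)) + Num.sqrt (VS t))) &
    bounded_measurable (fun t => Num.sqrt (VS t) *
      (2 * Num.sqrt (CB t * (1 - CB t)) - Num.sqrt (VS t)))].
  by split; apply: simple_rv_level_const => s t Wst; rewrite /VS /CB /cvard /cexpd Wst.
have -> : CL + GL = Ex P (fun t => cvard P C W t - cvard P (fun s => S s - C s) W t).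
  by rewrite ExB // addrC.
have bD : bounded_measurable
    (fun t => cvard P C W t - cvard P (fun s => S s - C s) W t).
  exact: bounded_measurableB.
split.
  rewrite -ExN //; apply: le_Ex => [||t]; [exact: bounded_measurableN | exact: bD |].
  by have /andP[] := cvard_diff_bounds t bS bC C01.
by apply: le_Ex => // t; have /andP[] := cvard_diff_bounds t bS bC C01.
Qed.

Lemma cexpd_ae (Z1 Z2 : T -> R) : measurable_fun setT Z1 -> measurable_fun setT Z2 ->
  {ae P, forall t, Z1 t = Z2 t} -> cexpd P Z1 W = cexpd P Z2 W.
Proof.
move=> m1 m2 Z12; apply: funext => t; rewrite /cexpd; congr (_ / _).
have [ml _] := bounded_measurable_level (W t).
by apply: ae_eq_Ex; [exact: measurable_funM.. | apply: filterS Z12 => s ->].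
Qed.

Lemma cvard_ae (Z1 Z2 : T -> R) : measurable_fun setT Z1 -> measurable_fun setT Z2 ->
  {ae P, forall t, Z1 t = Z2 t} -> cvard P Z1 W = cvard P Z2 W.
Proof.
move=> m1 m2 Z12; rewrite /cvard (cexpd_ae m1 m2 Z12).
have [mE _] : bounded_measurable (cexpd P Z2 W).
  by apply: simple_rv_level_const => s t Wst; rewrite /cexpd Wst.
apply: cexpd_ae; [apply: measurable_funX; exact: measurable_funB..|].
by apply: filterS Z12 => s ->.
Qed.

End conditional.

Section conditional_expectation.
Context {d : measure_display} {T : measurableType d} {R : realType}.
Variables (P : probability T R) (dU : measure_display) (U : measurableType dU).

Lemma ae_not_lt0_integral_ge0 (V : T -> R) (D : set T) : measurable D ->
  P.-integrable D (EFin \o V) -> (forall x, D x -> V x < 0) ->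
  (0 <= \int[P]_(x in D) (V x)%:E)%E -> {ae P, forall x, ~ D x}.
Proof.
move=> mD iV V_lt0 V_int_ge0.
have absV0 : (\int[P]_(x in D) `|(V x)%:E| = 0)%E.
  apply/eqP; rewrite eq_le integral_ge0 ?andbT => [|x _]; last exact: abse_ge0.
  rewrite (eq_integral (fun x => - (V x)%:E)%E) => [|x /set_mem Dx]; last first.
    by rewrite abse_EFin ltr0_norm ?V_lt0 // EFinN.
  rewrite integralN; last exact: (integrable_add_def mD iV).
  by rewrite leeNl oppe0.
case/integrableP: iV => mV _.
apply: filterS ((ae_eq_integral_abs P mD mV).1 absV0) => x V0 Dx.
by have := V_lt0 x Dx; case: (V0 Dx) => ->; rewrite ltxx.
Qed.

Lemma is_cond_exp_comp (dX : measure_display) (TX : measurableType dX) (X : T -> TX)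
    (f : TX -> U) (Z Q V : T -> R) :
  measurable_fun setT f -> is_cond_exp P Z X Q -> is_cond_exp P Q (f \o X) V ->
  is_cond_exp P Z (f \o X) V.
Proof.
move=> mf [_ [_ ZQ]] [V_version [iV QV]]; split => //; split => // A mA.
have mfA : measurable (f @^-1` A) by rewrite -[f @^-1` A]setTI; exact: mf.
by rewrite -QV //; exact: (ZQ _ mfA).
Qed.

Variables (W : T -> U) (mW : measurable_fun setT W).

Lemma is_cond_exp_ge0 (Z V : T -> R) : (forall t, 0 <= Z t) -> is_cond_exp P Z W V ->
  {ae P, forall t, 0 <= V t}.
Proof.
move=> Z_ge0 [[g [mg ->]] [iV ZV]].
have mA : measurable (g @^-1` `]-oo, 0[) by rewrite -[_ @^-1` _]setTI; exact: mg.
have mWA : measurable (W @^-1` (g @^-1` `]-oo, 0[)) by rewrite -[_ @^-1` _]setTI; exact: mW.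
set D := W @^-1` _ in mWA.
have g_lt0 x : D x -> g (W x) < 0 by rewrite /D /= in_itv.
have int_ge0 : (0 <= \int[P]_(x in D) (g (W x))%:E)%E.
  by rewrite -ZV //; apply: integral_ge0 => x _; rewrite lee_fin.
have iD := integrableS measurableT mWA (subsetT _) iV.
apply: filterS (ae_not_lt0_integral_ge0 mWA iD g_lt0 int_ge0) => x notin.
by rewrite leNgt; apply/negP => gx; apply: notin; rewrite /D /= in_itv.
Qed.

Lemma is_cond_exp_onem (Z V : T -> R) : P.-integrable setT (EFin \o Z) ->
  is_cond_exp P Z W V -> is_cond_exp P (fun t => 1 - Z t) W (fun t => 1 - V t).
Proof.
move=> iZ [[g [mg ->]] [iV ZV]].
have i1 := bounded_measurable_integrable P (bounded_measurable_cst (T := T) (1 : R)).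
split; [|split].
- exists (fun x => 1 - g x); split => //.
  by apply: measurable_funB => //; exact: measurable_cst.
- apply: (eq_integrable measurableT _ _ _ (integrableB measurableT i1 iV)) => x _.
  by rewrite /= EFinB.
move=> A mA; have mWA : measurable (W @^-1` A) by rewrite -[_ @^-1` _]setTI; exact: mW.
have iWA (F : T -> R) :
    P.-integrable setT (EFin \o F) -> P.-integrable (W @^-1` A) (EFin \o F).
  exact: integrableS measurableT mWA (subsetT _).
rewrite (integralB_EFin mWA (iWA _ i1) (iWA _ iZ)).
by rewrite (integralB_EFin mWA (iWA _ i1) (iWA _ iV)) ZV.
Qed.

Lemma is_cond_exp_in01 (Y V : T -> R) : bounded_measurable Y ->
  (forall t, 0 <= Y t <= 1) -> is_cond_exp P Y W V -> {ae P, forall t, 0 <= V t <= 1}.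
Proof.
move=> bY Y01 YV.
have V_ge0 := is_cond_exp_ge0 (fun t => proj1 (andP (Y01 t))) YV.
have onemY_ge0 t : 0 <= 1 - Y t by rewrite subr_ge0; case/andP: (Y01 t).
have := is_cond_exp_ge0 onemY_ge0
  (is_cond_exp_onem (bounded_measurable_integrable P bY) YV).
by apply: filterS2 V_ge0 => t V0 V1; rewrite V0 -subr_ge0.
Qed.

End conditional_expectation.

Section sd_bounds.
Context {d : measure_display} {T : measurableType d} {R : realType}.
Variable P : probability T R.

Lemma Ex_loss_bounds_of_sd_le (x k : T -> R) (e : R) :
  bounded_measurable x -> bounded_measurable k ->
  (forall t, 0 <= x t <= e) -> (forall t, 0 <= k t) ->
  - (2 * e) * Ex P k - e ^+ 2 <= - Ex P (fun t => x t * (2 * k t + x t)) /\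
  Ex P (fun t => x t * (2 * k t - x t)) <= 2 * e * Ex P k.
Proof.
move=> bx bk x_le k_ge0.
have xk t : - (2 * e) * k t - e ^+ 2 <= - (x t * (2 * k t + x t)) /\
            x t * (2 * k t - x t) <= 2 * e * k t.
  by have /andP[x0 xe] := x_le t; have := k_ge0 t; split; nra.
split.
  rewrite -ExZ // -[e ^+ 2](Ex_cst P) -ExB -?ExN; [|bounded_measurable_tac..].
  by apply: le_Ex => [||t]; [bounded_measurable_tac.. | exact: (xk t).1].
rewrite -ExZ //.
by apply: le_Ex => [||t]; [bounded_measurable_tac.. | exact: (xk t).2].
Qed.

End sd_bounds.

Lemma interval_partition_measurable {R : realType} n (B : 'I_n -> set R) :
  interval_partition B -> forall j, measurable (B j).
Proof. by case=> B_itv _ j; exact: is_interval_measurable. Qed.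

Section bins.
Context {d : measure_display} {T : measurableType d} {R : realType}.
Variables (P : probability T R) (S : T -> R) (n : nat) (B : 'I_n -> set R).
Hypotheses (bS : bounded_measurable S) (S01 : forall t, 0 <= S t <= 1)
  (B_part : interval_partition B).

Local Notation SB := (binned P S B).
Local Notation bin j := (fun t => \1_(B j) (S t) : R).

Lemma exists_bin t : exists j, B j (S t).
Proof.
have [_ [_ B_cover]] := B_part.
have : (\bigcup_(j in [set: 'I_n]) B j) (S t) by rewrite B_cover /= in_itv /= S01.
by case=> j _ Bj; exists j.
Qed.

Lemma bin_uniq i j t : B i (S t) -> B j (S t) -> i = j.
Proof.
have [_ [B_disj _]] := B_part; move=> Bi Bj; apply/eqP; apply: contraT => /B_disj ij.
by have : (B i `&` B j) (S t) by []; rewrite ij.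
Qed.

Lemma binned_comp (h : R -> R) t :
  h (SB t) = \sum_(j < n) bin j t * h (binavg P S (B j)).
Proof.
have [j Bj] := exists_bin t.
have bin0 i : i != j -> bin i t = 0.
  by move=> ij; rewrite indicE memNset // => Bi; move: ij; rewrite (bin_uniq Bi Bj) eqxx.
rewrite /binned (bigD1 j) //= big1 => [|i /bin0 ->]; last exact: mul0r.
rewrite (bigD1 j) //= big1 => [|i /bin0 ->]; last exact: mul0r.
by rewrite indicE mem_set // !mul1r !addr0.
Qed.

Lemma bounded_measurable_bin j : bounded_measurable (bin j).
Proof.
have [mS _] := bS.
split; last by exists 1 => t; rewrite indicE; case: (S t \in B j); rewrite ?normr1 ?normr0.
apply: (measurableT_comp (f := \1_(B j) : R -> R)) => //.
exact: measurable_indic (interval_partition_measurable B_part j).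
Qed.

Lemma binned_simple : simple_rv SB.
Proof.
move=> h; under eq_fun do rewrite binned_comp.
by apply: bounded_measurable_sum => j; apply: bounded_measurableM;
  [exact: bounded_measurable_bin | exact: bounded_measurable_cst].
Qed.

Lemma binavg_wmean j : binavg P S (B j) = wmean P (bin j) S.
Proof.
have [mS _] := bS.
have mSB : measurable (S @^-1` B j).
  by have := mS measurableT _ (interval_partition_measurable B_part j); rewrite setTI.
rewrite /binavg /wmean; congr (_ / _); apply/esym.
transitivity (Ex P (\1_(S @^-1` B j))); first by apply: eq_Ex => t; rewrite !indicE.
by rewrite /Ex integral_indic // setIT.
Qed.

Lemma Ex_sqr_dev_bin j :
  Ex P (fun s => (S s - binavg P S (B j)) ^+ 2 * bin j s) =
  wvar P (bin j) S * Ex P (bin j).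
Proof.
have bj := bounded_measurable_bin j.
by rewrite binavg_wmean Ex_mul_wmean //; bounded_measurable_tac.
Qed.


Hypotheses (n_gt0 : (0 < n)%N)
  (B_width : forall j : 'I_n, B j `<=` `[j%:R / n%:R, j.+1%:R / n%:R]).

Lemma wvar_bin_le j : wvar P (bin j) S <= (4 * n%:R ^+ 2)^-1.
Proof.
have -> : (4 * n%:R ^+ 2)^-1 = ((j.+1%:R / n%:R - j%:R / n%:R) / 2) ^+ 2 :> R.
  by rewrite -natr1; field; rewrite pnatr_eq0 -lt0n.
apply: wvar_le_sqr_halfwidth => //; first exact: bounded_measurable_bin.
move=> s; rewrite indicE.
case: (boolP (S s \in B j)) => [/set_mem/B_width Sj _|_]; last by rewrite ltxx.
by move: Sj; rewrite /= in_itv.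
Qed.

(* The level set {S_B = v} is the union of the bins whose average is v, and on each
   of them the second moment of S about v is the variance of S within the bin. *)
Lemma cvard_binned_le t : cvard P S SB t <= (4 * n%:R ^+ 2)^-1.
Proof.
set e := (4 * n%:R ^+ 2)^-1.
have e_ge0 : 0 <= e by rewrite invr_ge0 mulr_ge0 // sqr_ge0.
rewrite (cvardE _ binned_simple).
set v := SB t; set u := level SB v.
have bu : bounded_measurable u := bounded_measurable_level binned_simple v.
have u_ge0 : forall s, 0 <= u s := level_ge0 SB v.
have [u0|u_neq0] := eqVneq (Ex P u) 0; first by rewrite /wvar wmean_eq0.
have u_gt0 : 0 < Ex P u by rewrite lt0r u_neq0 Ex_ge0.
apply: le_trans (wvar_le_sqr_dev P bu v bS) _.
rewrite /wmean ler_pdivrMr //.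
have u_bins s : u s = \sum_(j < n) (binavg P S (B j) == v)%:R * bin j s.
  rewrite /u /level; have := binned_comp (fun x => (x == v)%:R) s; rewrite /= => ->.
  by apply: eq_bigr => j _; rewrite mulrC.
have dev_bins s : (S s - v) ^+ 2 * u s =
    \sum_(j < n) (binavg P S (B j) == v)%:R * ((S s - binavg P S (B j)) ^+ 2 * bin j s).
  rewrite u_bins mulr_sumr; apply: eq_bigr => j _.
  by have [->|_] := eqVneq (binavg P S (B j)) v; rewrite ?mul1r ?mul0r ?mulr0.
rewrite (eq_Ex P dev_bins) (eq_Ex P u_bins) !Ex_sum => [|j|j];
  try by have bj := bounded_measurable_bin j; bounded_measurable_tac.
rewrite mulr_sumr; apply: ler_sum => j _.
have bj := bounded_measurable_bin j.
rewrite !ExZ; [|bounded_measurable_tac..].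
rewrite Ex_sqr_dev_bin mulrCA; apply: ler_wpM2r (wvar_bin_le j).
by apply: mulr_ge0 => //; apply: Ex_ge0 => s; rewrite indicE.
Qed.


Lemma induced_loss_bounds_equal_width (C : T -> R) :
  bounded_measurable C -> (forall t, 0 <= C t <= 1) ->
  let CB := cexpd P C SB in
  let CL := - Ex P (cvard P (fun t => S t - C t) SB) in
  let GL := Ex P (cvard P C SB) in
  - (n%:R)^-1 * Ex P (fun t => Num.sqrt (CB t * (1 - CB t))) - (4 * n%:R ^+ 2)^-1
    <= CL + GL /\
  CL + GL <= (n%:R)^-1 * Ex P (fun t => Num.sqrt (CB t * (1 - CB t))).
Proof.
move=> bC C01 CB CL GL.
have [bsd bK] : bounded_measurable (fun t => Num.sqrt (cvard P S SB t)) /\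
    bounded_measurable (fun t => Num.sqrt (CB t * (1 - CB t))).
  by split; apply: (simple_rv_level_const binned_simple) => s t Wst;
    rewrite /CB /cvard /cexpd Wst.
have n_neq0 : n%:R != 0 :> R by rewrite pnatr_eq0 -lt0n.
set e : R := (2 * n%:R)^-1.
have sd_le t : 0 <= Num.sqrt (cvard P S SB t) <= e.
  have e_ge0 : 0 <= e by rewrite invr_ge0 mulr_ge0.
  rewrite sqrtr_ge0 -[e]ger0_norm // -sqrtr_sqr ler_sqrt ?sqr_ge0 //.
  have -> : e ^+ 2 = (4 * n%:R ^+ 2)^-1 by rewrite /e; field.
  exact: cvard_binned_le.
have [lo up] := induced_loss_bounds P binned_simple bS bC C01.
have [lo' up'] := Ex_loss_bounds_of_sd_le P bsd bK sd_le (fun t => sqrtr_ge0 _).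
have -> : (n%:R)^-1 = 2 * e by rewrite /e; field.
have -> : (4 * n%:R ^+ 2)^-1 = e ^+ 2 by rewrite /e; field.
by split; [exact: le_trans lo' lo | exact: le_trans up up'].
Qed.

End bins.

Theorem corollary1 (d : measure_display) (T : measurableType d) (R : realType)
  (P : probability T R)
  (dX : measure_display) (TX : measurableType dX) (X : T -> TX)
  (mX : measurable_fun setT X)
  (Y : T -> R) (mY : measurable_fun setT Y) (hY : forall t, Y t = 0 \/ Y t = 1)
  (Q : T -> R) (hQ : is_cond_exp P Y X Q)
  (f : TX -> R) (mf : measurable_fun setT f) (hf : forall x, 0 <= f x <= 1)
  (C : T -> R) (hC : is_cond_exp P Q (f \o X) C) :
  let S := f \o X in
  (forall (n : nat) (B : 'I_n -> set R), interval_partition B ->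
    let SB := binned P S B in
    let CB := cexpd P C SB in
    let VS := cvard P S SB in
    let CL := - Ex P (cvard P (fun t => S t - C t) SB) in
    let GL := Ex P (cvard P C SB) in
    - Ex P (fun t => Num.sqrt (VS t) *
               (2 * Num.sqrt (CB t * (1 - CB t)) + Num.sqrt (VS t)))
      <= CL + GL /\
    CL + GL <= Ex P (fun t => Num.sqrt (VS t) *
               (2 * Num.sqrt (CB t * (1 - CB t)) - Num.sqrt (VS t)))) /\
  (forall (N : nat) (B : 'I_N -> set R), (0 < N)%N -> equal_width_bins B ->
    let SB := binned P S B in
    let CB := cexpd P C SB in
    let CL := - Ex P (cvard P (fun t => S t - C t) SB) in
    let GL := Ex P (cvard P C SB) in
    - (N%:R)^-1 * Ex P (fun t => Num.sqrt (CB t * (1 - CB t)))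
       - (4 * N%:R ^+ 2)^-1 <= CL + GL /\
    CL + GL <= (N%:R)^-1 * Ex P (fun t => Num.sqrt (CB t * (1 - CB t)))).
Proof.
move=> S.
have mS : measurable_fun setT S := measurableT_comp mf mX.
have S01 t : 0 <= S t <= 1 := hf (X t).
have bS := bounded_measurable_in01 mS S01.
have Y01 t : 0 <= Y t <= 1 by case: (hY t) => ->; rewrite ?lexx ?ler01.
have C01 := is_cond_exp_in01 mS (bounded_measurable_in01 mY Y01) Y01
  (is_cond_exp_comp mf hQ hC).
have mC : measurable_fun setT C.
  by case: hC => [[g [mg ->]] _]; exact: measurableT_comp mg mS.
have [C' [mC' C'01] CC'] := ae_in01_version mC C01.
have SC' : {ae P, forall t, S t - C t = S t - C' t} by apply: filterS CC' => t ->.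
have mSC := measurable_funB mS mC; have mSC' := measurable_funB mS mC'.
have bC' := bounded_measurable_in01 mC' C'01.
split => [n B B_part | N B N_gt0 [B_part B_width]] SB;
  have SB_simple := binned_simple P bS S01 B_part;
  rewrite /= (cexpd_ae SB_simple mC mC' CC') (cvard_ae SB_simple mC mC' CC')
    (cvard_ae SB_simple mSC mSC' SC').
- exact: (induced_loss_bounds P SB_simple bS bC' C'01).
- exact: (induced_loss_bounds_equal_width P bS S01 B_part N_gt0
    (fun j => (B_width j).2) bC' C'01).
Qed.
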